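(* Let $I=(f_1,\dots,f_s)$ be an ideal of $R$ generated by homogeneous polynomials and let $M$ be a graded generalized Eulerian $A_n(K)$-module. Then $H^i_I(M)$ is a generalized Eulerian $A_n(K)$-module for all $i\ge0$.
   Context: $K$ is a field of characteristic zero, $R=K[X_1,\dots,X_n]$ standard graded, $A_n(K)$ the Weyl algebra graded by $\deg X_i=1$, $\deg\partial_i=-1$; $\mathcal E_n=\sum_iX_i\partial_i$; $|z|$ is the degree of homogeneous $z$. A graded left $A_n(K)$-module $M$ is generalized Eulerian if for every homogeneous $z\in M$ there is $a\ge1$ with $(\mathcal E_n-|z|)^az=0$. $H^i_I(M)$ is the local cohomology, with its natural graded $A_n(K)$-module structure (e.g. via the Čech complex on $f_1,\dots,f_s$). *)

From HB Require Import structures.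
From mathcomp Require Import all_boot all_order all_algebra.
From mathcomp Require Import mpoly.
Set Implicit Arguments. Unset Strict Implicit. Unset Printing Implicit Defensive.
Import Order.TTheory GRing.Theory Num.Theory.
Local Open Scope ring_scope.

(* A left A_n(K)-module is a K-vector space V together with the actions
   x i (multiplication by X_i) and d i (action of the derivation d_i).
   A grading is a family G : int -> V -> Prop of subspaces, G e = M_e. *)

Section WeylModules.
Variables (K : fieldType) (V : lmodType K) (n : nat).
Variables (x d : 'I_n -> V -> V) (G : int -> V -> Prop).

Definition weyl_module : Prop :=
  [/\ (forall i a u v, x i (a *: u + v) = a *: x i u + x i v),
      (forall i a u v, d i (a *: u + v) = a *: d i u + d i v),
      (forall i j v, x i (x j v) = x j (x i v)),
      (forall i j v, d i (d j v) = d j (d i v)) &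
      (forall i j v, d i (x j v) - x j (d i v) = (i == j)%:R *: v)].

Definition graded_weyl_module : Prop :=
  [/\ weyl_module,
      (forall e, G e 0) /\
      (forall e a u v, G e u -> G e v -> G e (a *: u + v)),
      (forall v, exists (s : seq int) (vs : int -> V),
          (forall e, G e (vs e)) /\ v = \sum_(e <- s) vs e),
      (forall (s : seq int) (vs : int -> V), uniq s ->
          (forall e, e \in s -> G e (vs e)) ->
          \sum_(e <- s) vs e = 0 -> forall e, e \in s -> vs e = 0) &
      (forall i e v, G e v -> G (e + 1) (x i v)) /\
      (forall i e v, G e v -> G (e - 1) (d i v))].

Definition euler (v : V) : V := \sum_(i < n) x i (d i v).

Definition gen_eulerian : Prop :=
  forall (e : int) (z : V), G e z ->
    exists a : nat, (1 <= a)%N /\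
      iter a (fun w => euler w - e%:~R *: w) z = 0.

Definition monact (m : 'X_{1..n}) (v : V) : V :=
  foldr (fun i w => iter (m i) (x i) w) v (enum 'I_n).

Definition polyact (p : {mpoly K[n]}) (v : V) : V :=
  \sum_(m <- msupp p) p@_m *: monact m v.

(* ---- localization M_f, represented by fractions v / f^k ----
   d_i (v / f^k) = (f d_i v - k (d_i f) v) / f^(k+1),
   X_i (v / f^k) = (X_i v) / f^k.
   Hence (E_n - e)(v / f^k) = euler_step f k e v / f^(k+1). *)
Definition euler_step (f : {mpoly K[n]}) (k : nat) (e : int) (v : V) : V :=
  \sum_(i < n) x i (polyact f (d i v) - k%:R *: polyact (mderiv i f) v)
  - e%:~R *: polyact f v.

(* (E_n - e)^a (v / f^k) = euler_iter f e a k v / f^(k+a) *)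
Fixpoint euler_iter (f : {mpoly K[n]}) (e : int) (a k : nat) (v : V) : V :=
  if a is a'.+1 then euler_iter f e a' k.+1 (euler_step f k e v) else v.

(* ---- Cech complex on f_1, ..., f_s ----
   C^i = (+)_{|S| = i} M_{f_S}, f_S = prod_{j in S} f_j.  A cochain with
   common denominator exponent k is given by c : {set 'I_s} -> V, meaning
   the family (c S / f_S^k)_S (only the values on |S| = i matter).
   The restriction M_{f_(T\j)} -> M_{f_T} sends v/f_(T\j)^k to f_j^k v/f_T^k. *)
Variables (s : nat) (f : 'I_s -> {mpoly K[n]}) (dg : 'I_s -> nat).

Definition fS (S : {set 'I_s}) : {mpoly K[n]} := \prod_(j in S) f j.
Definition degS (S : {set 'I_s}) : nat := (\sum_(j in S) dg j)%N.

(* numerator of the Cech differential of (c_S / f_S^k)_S, at T;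
   the result is (cech_d k c T) / f_T^k *)
Definition cech_d (k : nat) (c : {set 'I_s} -> V) (T : {set 'I_s}) : V :=
  \sum_(j in T) (-1) ^+ #|[set t in T | (t < j)%N]| *:
      polyact (f j ^+ k) (c (T :\ j)).

Definition cech_cocycle (i k : nat) (c : {set 'I_s} -> V) : Prop :=
  forall T : {set 'I_s}, #|T| = i.+1 ->
    exists N : nat, polyact (fS T ^+ N) (cech_d k c T) = 0.

(* (k, c) is an i-coboundary: equal in C^i to the differential of some
   (i-1)-cochain (l, b)  (for i = 0 this forces c = 0 in C^0 = M) *)
Definition cech_coboundary (i k : nat) (c : {set 'I_s} -> V) : Prop :=
  exists (l : nat) (b : {set 'I_s} -> V),
    forall S : {set 'I_s}, #|S| = i ->
      exists N : nat,
        polyact (fS S ^+ (k + N)) (cech_d l b S)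
        = polyact (fS S ^+ (l + N)) (c S).

(* (k, c) is homogeneous of degree e: each c_S / f_S^k lies in (M_{f_S})_e,
   i.e. c_S in M_(e + k deg f_S) *)
Definition cech_homogeneous (i k : nat) (e : int) (c : {set 'I_s} -> V) : Prop :=
  forall S : {set 'I_s}, #|S| = i -> G (e + (k * degS S)%N%:Z) (c S).

(* H^i_I(M) is generalized Eulerian: every homogeneous class z = [c/f^k]
   of degree e satisfies (E_n - e)^a z = 0 in H^i for some a >= 1 *)
Definition local_cohomology_gen_eulerian (i : nat) : Prop :=
  forall (e : int) (k : nat) (c : {set 'I_s} -> V),
    cech_homogeneous i k e c -> cech_cocycle i k c ->
    exists a : nat, (1 <= a)%N /\
      cech_coboundary i (k + a) (fun S => euler_iter (fS S) e a k (c S)).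

End WeylModules.

From HB Require Import structures.
From mathcomp Require Import all_boot all_order all_algebra.
From mathcomp Require Import mpoly.
Set Implicit Arguments. Unset Strict Implicit. Unset Printing Implicit Defensive.
Import GRing.Theory.
Local Open Scope ring_scope.

(** For homogeneous f of degree D, the relations [d_i, f] = df/dX_i and Euler's
identity sum_i X_i df/dX_i = D f give E_n (f v) = f (E_n v) + D f v.  On the
localization this yields (E_n - e)^a (v / f^k) = f^a (E_n - e - k D)^a v / f^(k+a).
The numerator c_S of a homogeneous Cech cochain of degree e lies in degree
e + k deg f_S, so a power of E_n - (e + k deg f_S) kills it since M is
generalized Eulerian.  A common exponent for the finitely many S makes
(E_n - e)^a vanish on the whole cochain, cocycle or not, hence on its class. *)

Lemma iter_commute (T : Type) (g h : T -> T) k :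
  (forall v, g (h v) = h (g v)) -> forall v, g (iter k h v) = iter k h (g v).
Proof. by move=> gh; elim: k => //= k IH v; rewrite gh IH. Qed.

Lemma iter_fixed_leq (T : Type) (g : T -> T) (z v : T) a b :
  g z = z -> (a <= b)%N -> iter a g v = z -> iter b g v = z.
Proof. by move=> gz ab gav; rewrite -(subnK ab) iterD gav iter_fix. Qed.

Lemma linear_iter (K : pzRingType) (V : lmodType K) (g : {linear V -> V}) k :
  linear (iter k g).
Proof. by elim: k => // k IH a u v; rewrite !iterS IH linearP. Qed.

HB.instance Definition _ (K : pzRingType) (V : lmodType K) (g : {linear V -> V}) k :=
  GRing.isLinear.Build K V V *:%R (iter k g) (linear_iter g k).

Lemma uniform_bound (T : finType) (P : T -> nat -> Prop) :
  (forall t a b, (a <= b)%N -> P t a -> P t b) ->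
  (forall t, exists a, P t a) -> exists a, forall t, P t a.
Proof.
move=> mono ex; suff [a Pa] : exists a, forall t, t \in enum T -> P t a.
  by exists a => t; apply/Pa/mem_enum.
elim: (enum T) => [|t r [a IH]]; first by exists 0%N.
have [b Pb] := ex t.
exists (maxn a b) => u; rewrite inE => /predU1P[->|ur].
- exact: mono (leq_maxr a b) Pb.
- exact: mono (leq_maxl a b) (IH u ur).
Qed.

Lemma fS_homog (K : fieldType) (n s : nat) (f : 'I_s -> {mpoly K[n]})
    (dg : 'I_s -> nat) S :
  (forall j, f j \is (dg j).-homog) -> fS f S \is (degS dg S).-homog.
Proof.
move=> hf; apply: (big_ind2 (fun p e => p \is e.-homog)) => //.
- exact: dhomog1.
- by move=> p1 d1 p2 d2; apply: dhomogM.
Qed.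

Section WeylAction.
Variables (K : fieldType) (n : nat) (V : lmodType K) (x d : 'I_n -> V -> V).
Hypotheses (x_linear : forall i, linear (x i)) (d_linear : forall i, linear (d i)).
Hypothesis xC : forall i j v, x i (x j v) = x j (x i v).
Hypothesis dxE : forall i j v, d i (x j v) - x j (d i v) = (i == j)%:R *: v.

HB.instance Definition _ i := GRing.isLinear.Build K V V *:%R (x i) (x_linear i).
HB.instance Definition _ i := GRing.isLinear.Build K V V *:%R (d i) (d_linear i).

Lemma d_xC i j v : i != j -> d i (x j v) = x j (d i v).
Proof. by move=> ij; apply/eqP; rewrite -subr_eq0 dxE (negPf ij) scale0r. Qed.

Lemma d_x j v : d j (x j v) = x j (d j v) + v.
Proof. by rewrite -[d j _](subrK (x j (d j v))) dxE eqxx scale1r addrC. Qed.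

Lemma d_iter_x j k v :
  d j (iter k (x j) v) = iter k (x j) (d j v) + k%:R *: iter k.-1 (x j) v.
Proof.
elim: k => [|k IH] /=; first by rewrite scale0r addr0.
rewrite d_x IH linearD linearZ /=.
case: k {IH} => [|k] /=; first by rewrite !scale0r scale1r addr0.
by rewrite -addrA [in RHS]mulrSr scalerDl scale1r.
Qed.

Definition xmon (mm : 'I_n -> nat) (l : seq 'I_n) (v : V) : V :=
  foldr (fun i w => iter (mm i) (x i) w) v l.

Lemma xmon_cons mm i l v : xmon mm (i :: l) v = iter (mm i) (x i) (xmon mm l v).
Proof. by []. Qed.

Lemma xmon_linear mm l : linear (xmon mm l).
Proof. by elim: l => // i l IH a u v; rewrite !xmon_cons IH linearP. Qed.

HB.instance Definition _ mm l :=
  GRing.isLinear.Build K V V *:%R (xmon mm l) (xmon_linear mm l).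

Lemma eq_xmon mm mm' l v : {in l, mm =1 mm'} -> xmon mm l v = xmon mm' l v.
Proof.
elim: l => //= i l IH eq_mm.
by rewrite eq_mm ?mem_head // IH // => k kl; rewrite eq_mm // inE kl orbT.
Qed.

Lemma x_xmonC j mm l v : x j (xmon mm l v) = xmon mm l (x j v).
Proof. by elim: l => //= i l <-; rewrite (iter_commute _ (xC j i)). Qed.

Lemma d_xmonC j mm l v : j \notin l -> d j (xmon mm l v) = xmon mm l (d j v).
Proof.
elim: l => //= i l IH; rewrite inE negb_or => /andP[ji /IH <-].
by rewrite (iter_commute _ (fun w => d_xC w ji)).
Qed.

Lemma xmon_rem j mm l v : uniq l -> j \in l ->
  xmon mm l v = iter (mm j) (x j) (xmon mm (rem j l) v).
Proof.
elim: l => // i l IH; rewrite cons_uniq in_cons => /andP[il ul].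
have [<- _|ji jl] := eqVneq j i; first by rewrite /= eqxx.
rewrite /= eq_sym (negPf ji) !xmon_cons IH //.
have xji w : iter (mm i) (x i) (x j w) = x j (iter (mm i) (x i) w).
  by rewrite (iter_commute _ (xC j i)).
by rewrite (iter_commute _ xji).
Qed.

Lemma monact_rem j (m : 'X_{1..n}) v :
  monact x m v = iter (m j) (x j) (xmon m (rem j (enum 'I_n)) v).
Proof. exact: xmon_rem (enum_uniq _) (mem_enum _ j). Qed.

HB.instance Definition _ (m : 'X_{1..n}) :=
  GRing.isLinear.Build K V V *:%R (monact x m) (xmon_linear m (enum 'I_n)).

Lemma xmon_rem_subU j (m : 'X_{1..n}) v :
  xmon (m - U_(j))%MM (rem j (enum 'I_n)) v = xmon m (rem j (enum 'I_n)) v.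
Proof.
apply: eq_xmon => k; rewrite mem_rem_uniq ?enum_uniq // inE => /andP[kj _].
by rewrite mnmBE mnm1E eq_sym (negPf kj) subn0.
Qed.

Lemma d_monact j (m : 'X_{1..n}) v :
  d j (monact x m v) = monact x m (d j v) + (m j)%:R *: monact x (m - U_(j))%MM v.
Proof.
rewrite !(monact_rem j) d_iter_x d_xmonC ?mem_rem_uniqF ?enum_uniq //.
by rewrite xmon_rem_subU mnmBE mnm1E eqxx subn1.
Qed.

Lemma x_monact_subU j (m : 'X_{1..n}) v :
  (0 < m j)%N -> x j (monact x (m - U_(j))%MM v) = monact x m v.
Proof.
move=> mj_gt0; rewrite !(monact_rem j) xmon_rem_subU mnmBE mnm1E eqxx subn1.
by rewrite -iterS prednK.
Qed.

Lemma x_monactC j (m : 'X_{1..n}) v : x j (monact x m v) = monact x m (x j v).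
Proof. exact: x_xmonC. Qed.

Lemma polyact_linear p : linear (polyact x p).
Proof.
move=> a u v; rewrite /polyact scaler_sumr -big_split; apply: eq_bigr => m _.
by rewrite linearP scalerDr !scalerA mulrC.
Qed.

HB.instance Definition _ p :=
  GRing.isLinear.Build K V V *:%R (polyact x p) (polyact_linear p).

Lemma polyact_sup p (r : seq 'X_{1..n}) v :
  uniq r -> {subset msupp p <= r} ->
  polyact x p v = \sum_(m <- r) p@_m *: monact x m v.
Proof.
move=> r_uniq supp_r; rewrite [RHS](bigID (mem (msupp p))) /=.
rewrite [X in _ + X]big1 ?addr0 => [|m]; last first.
  by rewrite mcoeff_msupp negbK => /eqP ->; rewrite scale0r.
rewrite -big_filter; apply: perm_big; apply: uniq_perm.
- exact: msupp_uniq.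
- exact: filter_uniq.
by move=> m; rewrite mem_filter andb_idr //; apply: supp_r.
Qed.

Lemma polyactP a p q v :
  polyact x (a *: p + q) v = a *: polyact x p v + polyact x q v.
Proof.
pose r := undup (msupp (a *: p + q) ++ msupp p ++ msupp q).
rewrite (@polyact_sup (a *: p + q) r) ?(@polyact_sup p r) ?(@polyact_sup q r)
  ?undup_uniq // => [|m mP|m mP|m mP]; rewrite ?mem_undup ?mem_cat ?mP ?orbT //.
rewrite scaler_sumr -big_split; apply: eq_bigr => m _.
by rewrite mcoeffD mcoeffZ scalerDl scalerA.
Qed.

Lemma polyact0 v : polyact x 0 v = 0.
Proof. by rewrite /polyact msupp0 big_nil. Qed.

Lemma polyactD p q v : polyact x (p + q) v = polyact x p v + polyact x q v.
Proof. by have := polyactP 1 p q v; rewrite !scale1r. Qed.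

Lemma polyactZ a p v : polyact x (a *: p) v = a *: polyact x p v.
Proof. by have := polyactP a p 0 v; rewrite addr0 polyact0 addr0. Qed.

Lemma polyact_sum (I : Type) (r : seq I) (F : I -> {mpoly K[n]}) v :
  polyact x (\sum_(i <- r) F i) v = \sum_(i <- r) polyact x (F i) v.
Proof.
exact: (big_morph (polyact x ^~ v) (fun p q => polyactD p q v) (polyact0 v)).
Qed.

Lemma polyactX m v : polyact x 'X_[m] v = monact x m v.
Proof. by rewrite /polyact msuppX big_seq1 mcoeffX eqxx scale1r. Qed.

Lemma polyact_mderiv j p v :
  polyact x (mderiv j p) v =
  \sum_(m <- msupp p) p@_m *: ((m j)%:R *: monact x (m - U_(j))%MM v).
Proof.
rewrite {1}(mpolyE p) linear_sum polyact_sum; apply: eq_bigr => m _.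
by rewrite linearZ /= mderivX !polyactZ polyactX.
Qed.

Lemma d_polyact j p v :
  d j (polyact x p v) = polyact x p (d j v) + polyact x (mderiv j p) v.
Proof.
rewrite polyact_mderiv /polyact linear_sum -big_split; apply: eq_bigr => m _.
by rewrite linearZ /= d_monact scalerDr.
Qed.

Lemma x_polyactC j p v : x j (polyact x p v) = polyact x p (x j v).
Proof.
by rewrite /polyact linear_sum; apply: eq_bigr => m _; rewrite linearZ /= x_monactC.
Qed.

Lemma euler_mderiv f dl v : f \is dl.-homog ->
  \sum_(i < n) x i (polyact x (mderiv i f) v) = dl%:R *: polyact x f v.
Proof.
move=> f_homog.
rewrite (eq_bigr (fun i =>
    \sum_(m <- msupp f) (m i)%:R *: (f@_m *: monact x m v))) => [|i _].
  rewrite exchange_big /polyact scaler_sumr; apply: eq_big_seq => m fm /=.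
  by rewrite -scaler_suml -natr_sum -mdegE (dhomog_mf f_homog fm).
rewrite polyact_mderiv linear_sum; apply: eq_bigr => m _; rewrite !linearZ /=.
have [->|mi_gt0] := posnP (m i); first by rewrite !scale0r scaler0.
by rewrite x_monact_subU // !scalerA mulrC.
Qed.

Lemma euler_linear : linear (euler x d).
Proof.
move=> a u v; rewrite /euler scaler_sumr -big_split; apply: eq_bigr => i _.
by rewrite !linearP.
Qed.

HB.instance Definition _ :=
  GRing.isLinear.Build K V V *:%R (euler x d) euler_linear.

Definition euler_shift (e : int) (v : V) : V := euler x d v - e%:~R *: v.

Lemma euler_shift_linear e : linear (euler_shift e).
Proof.
move=> a u v; rewrite /euler_shift linearP scalerDr scalerA mulrC -scalerA.
by rewrite opprD addrACA scalerBr.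
Qed.

HB.instance Definition _ e :=
  GRing.isLinear.Build K V V *:%R (euler_shift e) (euler_shift_linear e).

Section HomogeneousMultiplier.
Variables (f : {mpoly K[n]}) (dl : nat).
Hypothesis f_homog : f \is dl.-homog.

Lemma euler_polyact v :
  euler x d (polyact x f v) = polyact x f (euler x d v) + dl%:R *: polyact x f v.
Proof.
rewrite /euler (eq_bigr (fun i =>
    polyact x f (x i (d i v)) + x i (polyact x (mderiv i f) v))) => [|i _].
  by rewrite big_split /= (euler_mderiv _ f_homog) -linear_sum.
by rewrite d_polyact linearD /= x_polyactC.
Qed.

Lemma euler_shift_polyact e v :
  euler_shift (e + dl%:Z) (polyact x f v) = polyact x f (euler_shift e v).
Proof.
rewrite /euler_shift euler_polyact [in RHS]linearB [in RHS]linearZ /=.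
by rewrite intrD scalerDl -pmulrn opprD addrACA subrr addr0.
Qed.

Lemma euler_step_polyact k e v :
  euler_step x d f k e v = polyact x f (euler_shift (e + (k * dl)%N%:Z) v).
Proof.
have sum_x :
    \sum_(i < n) x i (polyact x f (d i v) - k%:R *: polyact x (mderiv i f) v)
    = polyact x f (euler x d v) - (k * dl)%N%:R *: polyact x f v.
  under eq_bigr => i _ do rewrite linearB /= [x i (_ *: _)]linearZ /= x_polyactC.
  by rewrite sumrB -scaler_sumr (euler_mderiv _ f_homog) scalerA -natrM -linear_sum.
rewrite /euler_step sum_x /euler_shift [in RHS]linearB [in RHS]linearZ /=.
by rewrite intrD scalerDl -pmulrn opprD addrA addrAC.
Qed.

Lemma euler_iter_polyact e a k v :
  euler_iter x d f e a k v =
  iter a (polyact x f) (iter a (euler_shift (e + (k * dl)%N%:Z)) v).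
Proof.
elim: a k v => // a IH k v; rewrite [LHS]/= IH euler_step_polyact.
have -> : e + (k.+1 * dl)%N%:Z = e + (k * dl)%N%:Z + dl%:Z.
  by rewrite mulSn PoszD addrCA addrC.
have shift_iter w : iter a (euler_shift (e + (k * dl)%N%:Z + dl%:Z)) (polyact x f w)
    = polyact x f (iter a (euler_shift (e + (k * dl)%N%:Z)) w).
  by elim: a {IH} => //= a ->; rewrite euler_shift_polyact.
by rewrite shift_iter -!iterSr.
Qed.

End HomogeneousMultiplier.

Section CechCochains.
Variables (s : nat) (f : 'I_s -> {mpoly K[n]}) (dg : 'I_s -> nat).
Hypothesis f_homog : forall j, f j \is (dg j).-homog.

Lemma cech_coboundary0 i (k : nat) (c : {set 'I_s} -> V) :
  (forall S : {set 'I_s}, #|S| = i -> c S = 0) -> cech_coboundary x f i k c.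
Proof.
move=> c0; exists 0%N, (fun=> 0) => S S_i; exists 0%N.
rewrite /cech_d big1 => [|j _]; last by rewrite linear0 scaler0.
by rewrite c0 // !linear0.
Qed.

Variable G : int -> V -> Prop.
Hypothesis M_gen_eulerian : gen_eulerian x d G.

Lemma euler_iter_homogeneous_cochain i e (k : nat) (c : {set 'I_s} -> V) :
  cech_homogeneous G dg i k e c -> exists a, (1 <= a)%N /\
    forall S : {set 'I_s}, #|S| = i -> euler_iter x d (fS f S) e a k (c S) = 0.
Proof.
move=> c_homog.
pose P (S : {set 'I_s}) a := #|S| = i ->
  iter a (euler_shift (e + (k * degS dg S)%N%:Z)) (c S) = 0.
have [a Pa] : exists a, forall S, P S a.
  apply: uniform_bound => [S a b ab Pa /Pa|S].
    by apply: iter_fixed_leq ab; rewrite linear0.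
  have [S_i|S_i] := eqVneq #|S| i; last first.
    by exists 0%N => /eqP; rewrite (negPf S_i).
  by have [b [_ Pb]] := M_gen_eulerian (c_homog S S_i); exists b.
exists a.+1; split=> // S S_i.
rewrite (euler_iter_polyact (fS_homog S f_homog)).
by rewrite (iter_fixed_leq _ (leqnSn a) (Pa S S_i)) ?linear0.
Qed.

Lemma gen_eulerian_local_cohomology i :
  local_cohomology_gen_eulerian x d G f dg i.
Proof.
move=> e k c c_homog _.
have [a [a_gt0 c0]] := euler_iter_homogeneous_cochain c_homog.
by exists a; split=> //; apply: cech_coboundary0.
Qed.

End CechCochains.
End WeylAction.

Theorem mainTheorem5 (K : fieldType) (hK : [pchar K] =i pred0)
    (n : nat) (V : lmodType K) (x d : 'I_n -> V -> V) (G : int -> V -> Prop)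
    (hM : graded_weyl_module x d G) (hE : gen_eulerian x d G)
    (s : nat) (f : 'I_s -> {mpoly K[n]}) (dg : 'I_s -> nat)
    (hf : forall j, f j \is (dg j).-homog) :
  forall i : nat, local_cohomology_gen_eulerian x d G f dg i.
Proof.
have [[x_linear d_linear xC _ dxE] _ _ _ _] := hM.
exact: (gen_eulerian_local_cohomology x_linear d_linear xC dxE hf hE).
Qed.
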